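(* Let $V$ be a braided vector space of diagonal type over a field $F$ of characteristic zero with basis $x_1,\dots,x_n$ and braiding $C(x_i\otimes x_j)=p_{i,j}x_j\otimes x_i$, and let $\mathfrak B(V)$ be its Nichols algebra. The following are equivalent: (1) $\mathfrak L(V)=\mathfrak L(V)_L$; (2) $\mathfrak L(V)=\mathfrak L^-(V)$; (3) $p_{i,i}^2=1$ for all $i$ and $p_{i,j}=p_{j,i}=1$ for all $1\le i\ne j\le n$. In this case $\mathfrak L(V)=\mathfrak L(V)_L=V$.
   Context: $\mathfrak B(V)=T(V)/\bigoplus_{m\ge2}\ker S_m$ is $\mathbb Z^n$-graded with $\deg x_i=e_i$; for homogeneous $u,v$ with $\deg u=\sum a_ie_i$, $\deg v=\sum b_je_j$ put $p_{u,v}=\prod p_{i,j}^{a_ib_j}$. $\mathfrak L(V)$ is the smallest subspace of $\mathfrak B(V)$ containing $V$ and closed under the braided bracket $[u,v]=uv-p_{u,v}vu$ (homogeneous $u,v$, extended bilinearly). $\mathfrak L(V)_L$ is the Lie subalgebra of $\mathfrak B(V)$ generated by $V$ under $[u,v]_L=p_{v,u}uv-p_{u,v}vu$, and $\mathfrak L^-(V)$ the Lie subalgebra generated by $V$ under the commutator $[u,v]^-=uv-vu$. *)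

From HB Require Import structures.
From mathcomp Require Import all_boot all_order all_algebra all_fingroup.
Set Implicit Arguments. Unset Strict Implicit. Unset Printing Implicit Defensive.
Import GRing.Theory.
Local Open Scope ring_scope.

Section Nichols.
Variable F : fieldType.
Variable n : nat.
(* braiding matrix: C(x_i (x) x_j) = p i j  x_j (x) x_i *)
Variable p : 'I_n -> 'I_n -> F.

(* words in the basis letters x_0..x_{n-1}; an element of T(V) is given by its
   coefficient on each word (finite support is imposed where relevant) *)
Definition word := seq 'I_n.
Definition tens := word -> F.
Definition tzero : tens := fun _ => 0.
Definition tadd (u v : tens) : tens := fun w => u w + v w.
Definition tscale (a : F) (u : tens) : tens := fun w => a * u w.
Definition tsub (u v : tens) : tens := tadd u (tscale (-1) v).
Definition tmul (u v : tens) : tens :=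
  fun w => \sum_(k < (size w).+1) u (take k w) * v (drop k w).
Definition gen (i : 'I_n) : tens := fun w => if w == [:: i] then 1 else 0.
Definition finsupp (u : tens) := exists N : nat, forall w, (N <= size w)%N -> u w = 0.

Definition deg := 'I_n -> nat.
Definition homog (d : deg) (u : tens) :=
  forall w, u w != 0 -> forall i, count_mem i w = d i.
Definition pdeg (d e : deg) : F := \prod_(i < n) \prod_(j < n) p i j ^+ (d i * e j).

(* quantum symmetrizer S_m = sum_{s in S_m} M(s) (Matsumoto lift); for diagonal
   braiding M(s) sends the letter at position k to position s k, with a factor
   p_{t_k,t_l} for every inversion k < l, s k > s l. *)
Definition permword m (s : 'S_m) (t : m.-tuple 'I_n) : word :=
  [seq tnth t ((s^-1)%g k) | k <- enum 'I_m].
Definition braidcoef m (s : 'S_m) (t : m.-tuple 'I_n) : F :=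
  \prod_(k < m) \prod_(l < m | ((k < l)%N && (s l < s k)%N)) p (tnth t k) (tnth t l).
Definition qsym m (u : tens) : tens :=
  fun w => \sum_(t : m.-tuple 'I_n) \sum_(s : 'S_m)
             u (val t) * braidcoef s t * (w == permword s t)%:R.

(* the ideal  (+)_{m >= 2} ker S_m  of T(V) *)
Definition nichols_ideal (u : tens) :=
  [/\ finsupp u, u [::] = 0, (forall w, size w = 1%N -> u w = 0)
    & forall m, (2 <= m)%N -> qsym m u = tzero].

(* subspaces of B(V) = T(V)/I are represented by their preimages in T(V),
   i.e. subspaces containing I *)
Definition subspaceB (P : tens -> Prop) :=
  [/\ P tzero, (forall u v, P u -> P v -> P (tadd u v)),
      (forall a u, P u -> P (tscale a u)) & (forall u, nichols_ideal u -> P u)].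

Definition contains_V (P : tens -> Prop) := forall i, P (gen i).

Definition braided_br (d e : deg) (u v : tens) : tens :=
  tsub (tmul u v) (tscale (pdeg d e) (tmul v u)).
Definition lieL_br (d e : deg) (u v : tens) : tens :=
  tsub (tscale (pdeg e d) (tmul u v)) (tscale (pdeg d e) (tmul v u)).
Definition comm_br (u v : tens) : tens := tsub (tmul u v) (tmul v u).

Definition LV (u : tens) : Prop :=
  forall P, subspaceB P -> contains_V P ->
   (forall d e a b, homog d a -> homog e b -> P a -> P b -> P (braided_br d e a b)) ->
   P u.
Definition LV_L (u : tens) : Prop :=
  forall P, subspaceB P -> contains_V P ->
   (forall d e a b, homog d a -> homog e b -> P a -> P b -> P (lieL_br d e a b)) ->
   P u.
Definition LV_minus (u : tens) : Prop :=
  forall P, subspaceB P -> contains_V P ->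
   (forall a b, P a -> P b -> P (comm_br a b)) -> P u.
Definition Vsp (u : tens) : Prop :=
  exists c : 'I_n -> F,
    nichols_ideal (tsub u (fun w => \sum_(i < n) c i * gen i w)).
End Nichols.

(* Write I for the Nichols ideal. If p_ii = +-1 and p_ij = 1 for i <> j, then modulo I
   every bracket of two elements of V + I is the bracket of their linear parts, a quadratic
   element killed by S_2, hence in I; as I is a two-sided ideal (S_(N+1) factors through S_N
   applied to one-sided derivatives), V + I is closed under all three brackets and the three
   closures of V coincide with V + I.  Conversely only degree two matters: the degree-two
   part of an element of L(V), L(V)_L or L^-(V) lies in span{x_i x_j - c_ij x_j x_i} + ker S_2
   for the constants c_ij of the corresponding bracket, and comparing these descriptions on
   the brackets of generators forces p_ij p_ji = 1 and then p_ij = p_ji = 1 for i <> j. *)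

From mathcomp Require Import all_boot all_order all_algebra all_fingroup.
From mathcomp Require Import zify ring.
From Stdlib Require Import FunctionalExtensionality.
Import GRing.Theory.
Local Open Scope ring_scope.
Set Implicit Arguments. Unset Strict Implicit. Unset Printing Implicit Defensive.

Lemma eq_of_subr_eq (R : zmodType) (X Y X' Y' : R) : X - Y = X' - Y' -> X' = Y' -> X = Y.
Proof. by move=> D E; apply/eqP; rewrite -subr_eq0 D E subrr. Qed.

Lemma crossed_factors_eq0 (R : idomainType) (D K K' A B : R) :
  D = K * A -> K * B = 0 -> D = K' * B -> D = 0.
Proof.
move=> DKA KB DK'B; apply/eqP; rewrite -[D == 0]orbb -mulf_eq0.
have -> : D * D = (K * B) * (K' * A) by rewrite {1}DKA DK'B; ring.
by rewrite KB mul0r.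
Qed.

Section LiftPerm.
Variable N : nat.
Implicit Types (i j : 'I_N.+1) (s : 'S_N.+1) (t : 'S_N).

Definition unlift_perm_fun i s (k : 'I_N) : 'I_N :=
  odflt k (unlift (s i) (s (lift i k))).

Lemma lift_unlift_perm_fun i s k :
  lift (s i) (unlift_perm_fun i s k) = s (lift i k).
Proof.
have : s i != s (lift i k) by rewrite (inj_eq perm_inj) neq_lift.
by rewrite /unlift_perm_fun; case/unlift_some=> k' -> ->.
Qed.

Lemma unlift_perm_fun_inj i s : injective (unlift_perm_fun i s).
Proof.
move=> k1 k2 /(congr1 (lift (s i))).
by rewrite !lift_unlift_perm_fun => /perm_inj /lift_inj.
Qed.

Definition unlift_perm i s : 'S_N := perm (@unlift_perm_fun_inj i s).

Lemma lift_unlift_perm i s : lift_perm i (s i) (unlift_perm i s) = s.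
Proof.
apply/permP => k; case: (unliftP i k) => [k'|] ->; last by rewrite lift_perm_id.
by rewrite lift_perm_lift permE lift_unlift_perm_fun.
Qed.

Lemma unlift_lift_perm i j t : unlift_perm i (lift_perm i j t) = t.
Proof.
apply/permP => k; apply: (@lift_inj _ j).
by rewrite permE -{1}(lift_perm_id i j t) lift_unlift_perm_fun lift_perm_lift.
Qed.

Lemma big_lift_perm (R : Type) (idx : R) (op : Monoid.com_law idx) i j
    (G : 'S_N.+1 -> R) :
  \big[op/idx]_(s : 'S_N.+1 | s i == j) G s = \big[op/idx]_(t : 'S_N) G (lift_perm i j t).
Proof.
rewrite (reindex (lift_perm i j)); last first.
  by exists (unlift_perm i) => [t _ | s /eqP <-];
    [exact: unlift_lift_perm | exact: lift_unlift_perm].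
by apply: eq_bigl => t; rewrite lift_perm_id eqxx.
Qed.

Lemma ltn_lift2 i (k l : 'I_N) : (lift i k < lift i l)%N = (k < l)%N.
Proof. by rewrite !ltnNge leq_bump2. Qed.

Lemma pivot_ltn_lift i (k : 'I_N) : (i < lift i k)%N = (i <= k)%N.
Proof. by rewrite /= /bump; case: leqP => ?; lia. Qed.

Lemma lift_ltn_pivot i (k : 'I_N) : (lift i k < i)%N = (k < i)%N.
Proof. by rewrite /= /bump; case: leqP => ?; lia. Qed.

End LiftPerm.

Lemma widen_ord_lift_max N (i : 'I_N) : widen_ord (leqnSn N) i = lift ord_max i.
Proof. by apply: val_inj; rewrite /= /bump leqNgt ltn_ord. Qed.

Definition tdelete (T : Type) N (w : N.+1.-tuple T) (k : 'I_N.+1) : N.-tuple T :=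
  [tuple tnth w (lift k j) | j < N].

Definition tpermute (T : Type) m (s : 'S_m) (w : m.-tuple T) : m.-tuple T :=
  [tuple tnth w (s k) | k < m].

Lemma tpermute_lift_perm_max (T : Type) N (w : N.+1.-tuple T) k (s : 'S_N) :
  val (tpermute (lift_perm ord_max k s) w) = rcons (tpermute s (tdelete w k)) (tnth w k).
Proof.
rewrite /= /mktuple enum_ordSr map_rcons -map_comp lift_perm_id.
congr rcons; apply: eq_map => i /=.
by rewrite widen_ord_lift_max lift_perm_lift tnth_mktuple.
Qed.

Lemma tpermute_lift_perm0 (T : Type) N (w : N.+1.-tuple T) k (s : 'S_N) :
  val (tpermute (lift_perm ord0 k s) w) = tnth w k :: tpermute s (tdelete w k).
Proof.
rewrite /= /mktuple enum_ordSl /= -map_comp lift_perm_id.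
by congr cons; apply: eq_map => i /=; rewrite lift_perm_lift tnth_mktuple.
Qed.

Lemma tuple1_val (T : Type) (t : 1.-tuple T) : val t = [:: tnth t ord0].
Proof. by case: t => [[|a [|b r]] //=]. Qed.

(** * The quantum symmetrizer *)

Section Symmetrizer.
Variables (F : fieldType) (n : nat) (p : 'I_n -> 'I_n -> F).
Local Notation tens := (tens F n).
Local Notation qsym := (qsym p).
Implicit Types (u v : tens).

Lemma size_permword m (s : 'S_m) (t : m.-tuple 'I_n) : size (permword s t) = m.
Proof. by rewrite size_map size_enum_ord. Qed.

Lemma qsym_size_neq m u w : size w != m -> qsym m u w = 0.
Proof.
move=> Hw; rewrite /qsym big1 // => t _; rewrite big1 // => s _.
rewrite (_ : w == _ = false) ?mulr0 //.
by apply: contraNF Hw => /eqP ->; rewrite size_permword.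
Qed.

Lemma permword_eq m (s : 'S_m) (t w : m.-tuple 'I_n) :
  (val w == permword s t) = (t == tpermute s w).
Proof.
have -> : permword s t = [tuple tnth t ((s^-1)%g k) | k < m] by [].
apply/eqP/eqP => [/val_inj -> | ->].
  by apply: eq_from_tnth => k; rewrite !tnth_mktuple permK.
by congr val; apply: eq_from_tnth => k; rewrite !tnth_mktuple permKV.
Qed.

Lemma qsym_tuple m u (w : m.-tuple 'I_n) :
  qsym m u w = \sum_(s : 'S_m) u (tpermute s w) * braidcoef p s (tpermute s w).
Proof.
rewrite /qsym exchange_big; apply: eq_bigr => s _.
rewrite (bigD1 (tpermute s w)) //= permword_eq eqxx mulr1 big1 ?addr0 // => t Ht.
by rewrite permword_eq (negbTE Ht) mulr0.
Qed.

Lemma eq_qsym m u v w : (forall t, size t = m -> u t = v t) -> qsym m u w = qsym m v w.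
Proof.
by move=> Huv; apply: eq_bigr => t _; apply: eq_bigr => s _; rewrite Huv ?size_tuple.
Qed.

Lemma qsymD m u v w : qsym m (tadd u v) w = qsym m u w + qsym m v w.
Proof.
rewrite /qsym -big_split; apply: eq_bigr => t _.
by rewrite -big_split; apply: eq_bigr => s _; rewrite !mulrDl.
Qed.

Lemma qsymZ m a u w : qsym m (tscale a u) w = a * qsym m u w.
Proof.
rewrite /qsym mulr_sumr; apply: eq_bigr => t _.
by rewrite mulr_sumr; apply: eq_bigr => s _; rewrite !mulrA.
Qed.

Lemma qsym0 m w : qsym m (@tzero F n) w = 0.
Proof. by rewrite /qsym big1 // => t _; rewrite big1 // => s _; rewrite !mul0r. Qed.


Definition rderiv (l : 'I_n) u : tens := fun t => u (rcons t l).
Definition lderiv (l : 'I_n) u : tens := fun t => u (l :: t).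

Definition coef_to_end N (w : N.+1.-tuple 'I_n) (k : 'I_N.+1) : F :=
  \prod_(c : 'I_N | (k <= c)%N) p (tnth w (lift k c)) (tnth w k).
Definition coef_to_front N (w : N.+1.-tuple 'I_n) (k : 'I_N.+1) : F :=
  \prod_(c : 'I_N | (c < k)%N) p (tnth w k) (tnth w (lift k c)).

Lemma braidcoef_lift_perm_max N (w : N.+1.-tuple 'I_n) k (s : 'S_N) :
  let S := lift_perm ord_max k s in
  braidcoef p S (tpermute S w) = braidcoef p s (tpermute s (tdelete w k)) * coef_to_end w k.
Proof.
move=> S; have HS c : S (widen_ord (leqnSn N) c) = lift k (s c).
  by rewrite widen_ord_lift_max lift_perm_lift.
have HM : S ord_max = k by rewrite lift_perm_id.
rewrite /braidcoef big_ord_recr /= [X in _ * X]big1 ?mulr1; last first.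
  by move=> c /andP [Hc _]; move: (ltn_ord c) Hc; lia.
rewrite /coef_to_end [X in _ = _ * X](reindex_inj (@perm_inj _ s)) /=.
rewrite [X in _ = _ * X]big_mkcond -big_split /=; apply: eq_bigr => a _.
rewrite big_mkcond big_ord_recr /= [in RHS]big_mkcond /=; congr (_ * _).
  by apply: eq_bigr => b _; rewrite !HS ltn_lift2 !tnth_mktuple !HS.
by rewrite HM HS pivot_ltn_lift ltn_ord /= !tnth_mktuple HM HS.
Qed.

Lemma braidcoef_lift_perm0 N (w : N.+1.-tuple 'I_n) k (s : 'S_N) :
  let S := lift_perm ord0 k s in
  braidcoef p S (tpermute S w) = braidcoef p s (tpermute s (tdelete w k)) * coef_to_front w k.
Proof.
move=> S; have HS c : S (lift ord0 c) = lift k (s c) by rewrite lift_perm_lift.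
have HM : S ord0 = k by rewrite lift_perm_id.
rewrite /braidcoef big_ord_recl /= mulrC; congr (_ * _).
  apply: eq_bigr => a _; rewrite big_mkcond big_ord_recl /= mul1r [in RHS]big_mkcond /=.
  apply: eq_bigr => b _.
  by rewrite !HS /bump !leq0n !add1n ltnS ltn_lift2 !tnth_mktuple !HS.
rewrite big_mkcond big_ord_recl /= mul1r /coef_to_front.
rewrite [RHS](reindex_inj (@perm_inj _ s)) /= [RHS]big_mkcond /=.
by apply: eq_bigr => b _; rewrite HS HM lift_ltn_pivot !tnth_mktuple HS HM.
Qed.

(* The factorisation S_(N+1) = (S_N (x) id)(1 + c_N + c_N c_(N-1) + ...), obtained by
   sorting the permutations according to the position they send to the end. *)
Lemma qsym_recr N u (w : N.+1.-tuple 'I_n) :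
  qsym N.+1 u w =
  \sum_(k < N.+1) coef_to_end w k * qsym N (rderiv (tnth w k) u) (tdelete w k).
Proof.
rewrite qsym_tuple (partition_big (fun s : 'S_N.+1 => s ord_max) predT) //.
apply: eq_bigr => k _; rewrite qsym_tuple mulr_sumr big_lift_perm.
apply: eq_bigr => s _; rewrite braidcoef_lift_perm_max /rderiv -tpermute_lift_perm_max.
by rewrite mulrA mulrC mulrA.
Qed.

Lemma qsym_recl N u (w : N.+1.-tuple 'I_n) :
  qsym N.+1 u w =
  \sum_(k < N.+1) coef_to_front w k * qsym N (lderiv (tnth w k) u) (tdelete w k).
Proof.
rewrite qsym_tuple (partition_big (fun s : 'S_N.+1 => s ord0) predT) //.
apply: eq_bigr => k _; rewrite qsym_tuple mulr_sumr big_lift_perm.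
apply: eq_bigr => s _; rewrite braidcoef_lift_perm0 /lderiv -tpermute_lift_perm0.
by rewrite mulrA mulrC mulrA.
Qed.

Lemma qsym_nil u : qsym 0 u [::] = u [::].
Proof.
rewrite (qsym_tuple _ [tuple]) (eq_bigr (fun _ => u [::])) ?sumr_const ?card_Sn //.
by move=> s _; rewrite /braidcoef big_ord0 mulr1 tuple0.
Qed.

Lemma qsym_tuple1 u (t : 1.-tuple 'I_n) : qsym 1 u t = u t.
Proof.
rewrite qsym_recr big_ord1 /coef_to_end big1; last by case.
by rewrite mul1r tuple0 qsym_nil /rderiv [in RHS]tuple1_val.
Qed.

Lemma qsym_pair u x y : qsym 2 u [:: x; y] = u [:: x; y] + p y x * u [:: y; x].
Proof.
rewrite (qsym_recr _ [tuple x; y]) big_ord_recl big_ord1 /coef_to_end.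
rewrite big_ord1 big1; last by case=> [[|c] Hc].
rewrite !qsym_tuple1 /rderiv !tuple1_val !tnth_mktuple /= mul1r addrC.
by rewrite !(tnth_nth x).
Qed.

End Symmetrizer.

(** * The Nichols ideal *)

Section NicholsIdeal.
Variables (F : fieldType) (n : nat) (p : 'I_n -> 'I_n -> F).
Local Notation tens := (tens F n).
Local Notation qsym := (qsym p).
Implicit Types (u v : tens).

Lemma tmul_nil u v : tmul u v [::] = u [::] * v [::].
Proof. by rewrite /tmul big_ord1. Qed.

Lemma tmul_pair u v x y :
  tmul u v [:: x; y] = u [::] * v [:: x; y] + u [:: x] * v [:: y] + u [:: x; y] * v [::].
Proof. by rewrite /tmul big_ord_recl big_ord_recl big_ord1 /= addrA. Qed.

Lemma rderiv_tmul l u v :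
  rderiv l (tmul u v) = tadd (tmul u (rderiv l v)) (tscale (v [::]) (rderiv l u)).
Proof.
apply: functional_extensionality => t.
rewrite /rderiv /tadd /tscale /tmul size_rcons big_ord_recr /= mulrC.
rewrite take_oversize ?size_rcons // drop_oversize ?size_rcons //.
congr (_ + _); apply: eq_bigr => k _ /=.
by rewrite -cats1 takel_cat ?cats1 ?drop_rcons // -ltnS.
Qed.

Lemma lderiv_tmul l u v :
  lderiv l (tmul u v) = tadd (tmul (lderiv l u) v) (tscale (u [::]) (lderiv l v)).
Proof.
apply: functional_extensionality => t.
by rewrite /lderiv /tadd /tscale /tmul /= big_ord_recl /= addrC.
Qed.

Definition symker u := forall m w, qsym m u w = 0.

Lemma symker_mulr u v : symker u -> symker (tmul u v).
Proof.
(* rderiv l is a twisted derivation of tmul, so after one step of qsym_recr the induction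
   hypothesis leaves v [::] * qsym N.+1 u w. *)
move=> Hu m; elim: m v => [|N IH] v w.
  case: w => [|x w]; last by rewrite qsym_size_neq.
  by rewrite qsym_nil tmul_nil -(qsym_nil p) Hu mul0r.
have [Hw|] := eqVneq (size w) N.+1; last by apply: qsym_size_neq.
rewrite (_ : w = Tuple (introT eqP Hw)) // qsym_recr.
under eq_bigr do rewrite rderiv_tmul qsymD qsymZ IH add0r mulrCA.
by rewrite -mulr_sumr -qsym_recr Hu mulr0.
Qed.

Lemma symker_mull u v : symker u -> symker (tmul v u).
Proof.
move=> Hu m; elim: m v => [|N IH] v w.
  case: w => [|x w]; last by rewrite qsym_size_neq.
  by rewrite qsym_nil tmul_nil -(qsym_nil p u) Hu mulr0.
have [Hw|] := eqVneq (size w) N.+1; last by apply: qsym_size_neq.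
rewrite (_ : w = Tuple (introT eqP Hw)) // qsym_recl.
under eq_bigr do rewrite lderiv_tmul qsymD qsymZ IH add0r mulrCA.
by rewrite -mulr_sumr -qsym_recl Hu mulr0.
Qed.

Lemma finsupp_tmul u v : finsupp u -> finsupp v -> finsupp (tmul u v).
Proof.
move=> [Nu Hu] [Nv Hv]; exists (Nu + Nv)%N => w Hw; rewrite /tmul big1 // => k _.
have : (Nu <= size (take k w))%N || (Nv <= size (drop k w))%N.
  by rewrite size_take size_drop; case: ifP => ?; lia.
by case/orP => [/Hu -> | /Hv ->]; rewrite ?mul0r ?mulr0.
Qed.

Lemma finsupp_tadd u v : finsupp u -> finsupp v -> finsupp (tadd u v).
Proof.
by move=> [Nu Hu] [Nv Hv]; exists (Nu + Nv)%N => w Hw; rewrite /tadd Hu ?Hv ?addr0 //; lia.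
Qed.

Lemma finsupp_tscale a u : finsupp u -> finsupp (tscale a u).
Proof. by move=> [N Hu]; exists N => w Hw; rewrite /tscale Hu ?mulr0. Qed.

Lemma nichols_idealE u : nichols_ideal p u <-> finsupp u /\ symker u.
Proof.
split=> [[Hf H0 H1 H] | [Hf H]]; split=> //.
- case=> [|[|m]] w; last by rewrite H.
    by rewrite (@eq_qsym F n p _ _ (@tzero F n)) ?qsym0 // => -[].
  by rewrite (@eq_qsym F n p _ _ (@tzero F n)) ?qsym0.
- by rewrite -(qsym_nil p) H.
- by case=> [|x [|y r]] // _; rewrite -(qsym_tuple1 p _ [tuple x]) H.
- by move=> m _; apply: functional_extensionality => w; rewrite H.
Qed.

Lemma eq_nichols_ideal u v : u =1 v -> nichols_ideal p u -> nichols_ideal p v.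
Proof. by move=> /functional_extensionality ->. Qed.

Lemma nichols_ideal0 : nichols_ideal p (@tzero F n).
Proof. by apply/nichols_idealE; split; [exists 0%N | move=> m w; rewrite qsym0]. Qed.

Lemma nichols_idealD u v :
  nichols_ideal p u -> nichols_ideal p v -> nichols_ideal p (tadd u v).
Proof.
move=> /nichols_idealE[fu Hu] /nichols_idealE[fv Hv]; apply/nichols_idealE.
by split=> [|m w]; [exact: finsupp_tadd | rewrite qsymD Hu Hv addr0].
Qed.

Lemma nichols_idealZ a u : nichols_ideal p u -> nichols_ideal p (tscale a u).
Proof.
move=> /nichols_idealE[fu Hu]; apply/nichols_idealE.
by split=> [|m w]; [exact: finsupp_tscale | rewrite qsymZ Hu mulr0].
Qed.

Lemma nichols_ideal_mulr u v :
  nichols_ideal p u -> finsupp v -> nichols_ideal p (tmul u v).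
Proof.
move=> /nichols_idealE[fu Hu] fv; apply/nichols_idealE.
by split; [exact: finsupp_tmul | exact: symker_mulr].
Qed.

Lemma nichols_ideal_mull u v :
  nichols_ideal p u -> finsupp v -> nichols_ideal p (tmul v u).
Proof.
move=> /nichols_idealE[fu Hu] fv; apply/nichols_idealE.
by split; [exact: finsupp_tmul | exact: symker_mull].
Qed.

Definition sym2 (q : 'I_n -> 'I_n -> F) x y := q x y + p y x * q y x.

Lemma nichols_ideal_quadratic u :
  (forall w, size w != 2 -> u w = 0) ->
  (forall x y, sym2 (fun x y => u [:: x; y]) x y = 0) -> nichols_ideal p u.
Proof.
move=> u_quad u_sym; apply/nichols_idealE; split.
  by exists 3%N => w Hw; apply: u_quad; apply: contraTneq Hw => ->.
move=> m w; have [-> | m_neq2] := eqVneq m 2%N.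
  have [|/qsym_size_neq -> //] := eqVneq (size w) 2.
  by case: w => [|x [|y [|z w]]] // _; rewrite qsym_pair; apply: u_sym.
rewrite (@eq_qsym F n p _ _ (@tzero F n)) ?qsym0 // => t Ht.
by apply: u_quad; rewrite Ht.
Qed.

End NicholsIdeal.

(** * The subspace V + I *)

Section VPlusIdeal.
Variables (F : fieldType) (n : nat) (p : 'I_n -> 'I_n -> F).
Local Notation tens := (tens F n).
Implicit Types (u v a b : tens).

Definition vlin (c : 'I_n -> F) : tens := fun w => \sum_(i < n) c i * gen F i w.

Lemma vlinE c w : vlin c w = if w is [:: x] then c x else 0.
Proof.
rewrite /vlin /gen; case: w => [|x [|y w]].
- by rewrite big1 // => i _; rewrite mulr0.
- rewrite (bigD1 x) //= eqxx mulr1 big1 ?addr0 // => i Hi.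
  by rewrite eqseq_cons andbT eq_sym (negbTE Hi) mulr0.
- by rewrite big1 // => i _; rewrite eqseq_cons andbF mulr0.
Qed.

Lemma finsupp_vlin c : finsupp (vlin c).
Proof. by exists 2%N => -[|x [|y w]] //; rewrite vlinE. Qed.

Lemma tmul_vlin c d w :
  tmul (vlin c) (vlin d) w = if w is [:: x; y] then c x * d y else 0.
Proof.
rewrite /tmul; case: w => [|x [|y [|z w]]].
- by rewrite big_ord1 /= !vlinE mul0r.
- by rewrite big_ord_recl big_ord1 /= !vlinE mul0r mulr0 addr0.
- by rewrite big_ord_recl big_ord_recl big_ord1 /= !vlinE !mul0r add0r addr0.
rewrite big1 // => k _; rewrite !vlinE.
case Etake: (take k _) => [|x' [|? ?]]; rewrite ?mul0r //.
case Edrop: (drop k _) => [|y' [|? ?]]; rewrite ?mulr0 //.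
by have := cat_take_drop k [:: x, y, z & w]; rewrite Etake Edrop.
Qed.

Lemma VspP u : Vsp p u <-> nichols_ideal p (tsub u (vlin (fun x => u [:: x]))).
Proof.
split=> [[c Hc] | Hu]; last by exists (fun x => u [:: x]).
suff -> : (fun x => u [:: x]) = c by [].
apply: functional_extensionality => x; case: Hc => _ _ H1 _.
have := H1 [:: x] erefl; have := vlinE c [:: x]; rewrite /vlin /tsub /tadd /tscale => -> /eqP.
by rewrite mulN1r subr_eq0 => /eqP.
Qed.


Lemma VspE u : Vsp p u <-> exists c, nichols_ideal p (tsub u (vlin c)).
Proof. by []. Qed.

Lemma finsupp_Vsp u : Vsp p u -> finsupp u.
Proof.
case=> c [fu _ _ _]; have -> : u = tadd (tsub u (vlin c)) (vlin c).
  by apply: functional_extensionality => w; rewrite /tsub /tadd /tscale; ring.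
exact/finsupp_tadd/finsupp_vlin.
Qed.

Lemma nichols_ideal_Vsp u : nichols_ideal p u -> Vsp p u.
Proof.
move=> Hu; apply/VspE; exists (fun _ => 0); apply: (eq_nichols_ideal _ Hu) => w.
by rewrite /tsub /tadd /tscale vlinE; case: w => [|x [|y r]]; ring.
Qed.

Lemma Vsp_subspace : subspaceB p (Vsp p).
Proof.
split.
- apply/VspE; exists (fun _ => 0); apply: (eq_nichols_ideal _ (nichols_ideal0 p)) => w.
  by rewrite /tsub /tadd /tscale /tzero vlinE; case: w => [|x [|y r]]; ring.
- move=> u v /VspE[cu Hu] /VspE[cv Hv]; apply/VspE; exists (fun i => cu i + cv i).
  apply: (eq_nichols_ideal _ (nichols_idealD Hu Hv)) => w.
  by rewrite /tsub /tadd /tscale !vlinE; case: w => [|x [|y r]]; ring.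
- move=> a u /VspE[cu Hu]; apply/VspE; exists (fun i => a * cu i).
  apply: (eq_nichols_ideal _ (nichols_idealZ a Hu)) => w.
  by rewrite /tsub /tadd /tscale !vlinE; case: w => [|x [|y r]]; ring.
- exact: nichols_ideal_Vsp.
Qed.

Lemma Vsp_V : contains_V (Vsp p).
Proof.
move=> i; apply/VspE; exists (fun j => (j == i)%:R).
apply: (eq_nichols_ideal _ (nichols_ideal0 p)) => w.
rewrite /tsub /tadd /tscale /tzero vlinE /gen.
case: w => [|x [|y w]]; rewrite ?eqseq_cons ?andbT ?andbF /=; try ring.
by case: (x == i) => /=; ring.
Qed.

Lemma vlin_big c : vlin c = \big[@tadd F n/@tzero F n]_(i < n) tscale (c i) (gen F i).
Proof.
apply: functional_extensionality => w; rewrite /vlin.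
by apply: (big_rec2 (fun (y : F) (f : tens) => y = f w)) => // i y f _ ->.
Qed.

Lemma Vsp_min (P : tens -> Prop) u : subspaceB p P -> contains_V P -> Vsp p u -> P u.
Proof.
move=> [P0 PD PZ PI] PV /VspE[c Hc].
have -> : u = tadd (tsub u (vlin c)) (vlin c).
  by apply: functional_extensionality => w; rewrite /tsub /tadd /tscale; ring.
apply: (PD _ _ (PI _ Hc)); rewrite vlin_big.
by apply: (big_ind P) => // i _; apply/PZ/PV.
Qed.

Definition twist_br k1 k2 a b : tens := fun w => k1 * tmul a b w - k2 * tmul b a w.

Lemma tmul_decomp a a0 b b0 w :
  tmul a b w = tmul (tsub a a0) b w + tmul a0 (tsub b b0) w + tmul a0 b0 w.
Proof.
rewrite /tmul -!big_split; apply: eq_bigr => k _ /=.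
by rewrite /tsub /tadd /tscale; ring.
Qed.

Lemma nichols_ideal_twist_br k1 k2 a b :
  Vsp p a -> Vsp p b ->
  (forall x y,
     sym2 p (fun x y => k1 * (a [:: x] * b [:: y]) - k2 * (a [:: y] * b [:: x])) x y = 0) ->
  nichols_ideal p (twist_br k1 k2 a b).
Proof.
(* Modulo the ideal, a and b are congruent to their linear parts A and B, and the bracket
   of A and B is a quadratic element which the hypothesis puts in ker S_2. *)
move=> Va Vb Hq; set A := vlin (fun x => a [:: x]); set B := vlin (fun x => b [:: x]).
have [Ia Ib] : nichols_ideal p (tsub a A) /\ nichols_ideal p (tsub b B) by split; apply/VspP.
have [fa fb] := (finsupp_Vsp Va, finsupp_Vsp Vb).
have IAB : nichols_ideal p (twist_br k1 k2 A B).
  apply: nichols_ideal_quadratic => [w Hw | x y].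
    by rewrite /twist_br !tmul_vlin; case: w Hw => [|x [|y [|z w]]]; rewrite ?mulr0 ?subr0.
  by rewrite -(Hq x y) /sym2 /twist_br !tmul_vlin; ring.
have Iab := nichols_idealD (nichols_idealZ k1 (nichols_ideal_mulr Ia fb))
  (nichols_idealZ k1 (nichols_ideal_mull Ib (finsupp_vlin (fun x => a [:: x])))).
have Iba := nichols_idealD (nichols_idealZ (- k2) (nichols_ideal_mulr Ib fa))
  (nichols_idealZ (- k2) (nichols_ideal_mull Ia (finsupp_vlin (fun x => b [:: x])))).
apply: (eq_nichols_ideal _ (nichols_idealD (nichols_idealD Iab Iba) IAB)) => w.
rewrite /tadd /tscale /twist_br (tmul_decomp a A b B) (tmul_decomp b B a A).
by ring.
Qed.

End VPlusIdeal.

Section Brackets.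
Variables (F : fieldType) (n : nat) (p : 'I_n -> 'I_n -> F).
Local Notation tens := (tens F n).
Implicit Types (u a b : tens) (d e : deg n).

Definition unit_deg (i : 'I_n) : deg n := fun k => (i == k) : nat.

Lemma homog_gen i : homog (unit_deg i) (gen F i).
Proof.
move=> w; rewrite /gen; have [-> _ k | _] := eqVneq w [:: i]; last by rewrite eqxx.
by rewrite /= addn0.
Qed.

Lemma homog_letter d a x : homog d a -> a [:: x] != 0 -> d = unit_deg x.
Proof.
by move=> Ha ax; apply: functional_extensionality => i; rewrite -(Ha _ ax i) /= addn0.
Qed.

Lemma pdeg_unit_deg i j : pdeg p (unit_deg i) (unit_deg j) = p i j.
Proof.
rewrite /pdeg (bigD1 i) //= [X in _ * X]big1 => [|k ki]; last first.
  by apply: big1 => l _; rewrite /unit_deg eq_sym (negbTE ki) mul0n expr0.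
rewrite (bigD1 j) //= big1 => [|l lj]; last by rewrite /unit_deg eq_sym (negbTE lj) muln0.
by rewrite /unit_deg !eqxx expr1 !mulr1.
Qed.

Lemma pdeg_letters d e a b x y : homog d a -> homog e b ->
  pdeg p d e * (a [:: x] * b [:: y]) = p x y * (a [:: x] * b [:: y]).
Proof.
move=> Ha Hb; have [->|ax] := eqVneq (a [:: x]) 0; first by rewrite !(mul0r, mulr0).
have [->|by_] := eqVneq (b [:: y]) 0; first by rewrite !mulr0.
by rewrite (homog_letter Ha ax) (homog_letter Hb by_) pdeg_unit_deg.
Qed.

Lemma pdeg_letters_swap d e a b x y : homog d a -> homog e b ->
  pdeg p e d * (a [:: x] * b [:: y]) = p y x * (a [:: x] * b [:: y]).
Proof. by move=> Ha Hb; rewrite !(mulrC (a _)) (pdeg_letters _ _ Hb Ha). Qed.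

Lemma braided_brE d e a b : braided_br p d e a b = twist_br 1 (pdeg p d e) a b.
Proof.
by apply: functional_extensionality => w; rewrite /braided_br /tsub /tadd /tscale /twist_br; ring.
Qed.

Lemma lieL_brE d e a b : lieL_br p d e a b = twist_br (pdeg p e d) (pdeg p d e) a b.
Proof.
by apply: functional_extensionality => w; rewrite /lieL_br /tsub /tadd /tscale /twist_br; ring.
Qed.

Lemma comm_brE a b : comm_br a b = twist_br 1 1 a b.
Proof.
by apply: functional_extensionality => w; rewrite /comm_br /tsub /tadd /tscale /twist_br; ring.
Qed.

Definition sign_braiding :=
  (forall i, p i i ^+ 2 = 1) /\ (forall i j, i != j -> p i j = 1 /\ p j i = 1).

Lemma sign_braiding_mul : sign_braiding -> forall x y, p x y * p y x = 1.
Proof.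
case=> diag offdiag x y; have [<-|xy] := eqVneq x y; first by rewrite -expr2.
by have [-> ->] := offdiag _ _ xy; rewrite mulr1.
Qed.

Section SignBraiding.
Hypothesis sign_p : sign_braiding.

Lemma Vsp_braided_br d e a b : homog d a -> homog e b ->
  Vsp p a -> Vsp p b -> Vsp p (braided_br p d e a b).
Proof.
move=> Ha Hb Va Vb; rewrite braided_brE.
apply/nichols_ideal_Vsp/nichols_ideal_twist_br => // x y.
rewrite /sym2 !(pdeg_letters _ _ Ha Hb).
transitivity (a [:: x] * b [:: y] * (1 - p x y * p y x)); first by ring.
by rewrite sign_braiding_mul // subrr mulr0.
Qed.

Lemma Vsp_lieL_br d e a b : homog d a -> homog e b ->
  Vsp p a -> Vsp p b -> Vsp p (lieL_br p d e a b).
Proof.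
move=> Ha Hb Va Vb; rewrite lieL_brE.
apply/nichols_ideal_Vsp/nichols_ideal_twist_br => // x y.
rewrite /sym2 !(pdeg_letters _ _ Ha Hb) !(pdeg_letters_swap _ _ Ha Hb).
have [<-|xy] := eqVneq x y; first by ring.
by have [-> ->] := sign_p.2 _ _ xy; ring.
Qed.

Lemma Vsp_comm_br a b : Vsp p a -> Vsp p b -> Vsp p (comm_br a b).
Proof.
move=> Va Vb; rewrite comm_brE; apply/nichols_ideal_Vsp/nichols_ideal_twist_br => // x y.
rewrite /sym2; have [<-|xy] := eqVneq x y; first by ring.
by have [_ ->] := sign_p.2 _ _ xy; ring.
Qed.

Lemma LV_Vsp u : LV p u <-> Vsp p u.
Proof.
split=> [Hu | Vu P HP HV _]; last exact: (Vsp_min HP HV Vu).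
apply: Hu => [||d e a b Ha Hb]; [exact: Vsp_subspace | exact: Vsp_V |].
exact: Vsp_braided_br.
Qed.

Lemma LV_L_Vsp u : LV_L p u <-> Vsp p u.
Proof.
split=> [Hu | Vu P HP HV _]; last exact: (Vsp_min HP HV Vu).
apply: Hu => [||d e a b Ha Hb]; [exact: Vsp_subspace | exact: Vsp_V |].
exact: Vsp_lieL_br.
Qed.

Lemma LV_minus_Vsp u : LV_minus p u <-> Vsp p u.
Proof.
split=> [Hu | Vu P HP HV _]; last exact: (Vsp_min HP HV Vu).
by apply: Hu; [exact: Vsp_subspace | exact: Vsp_V | exact: Vsp_comm_br].
Qed.

End SignBraiding.

End Brackets.

(** * Degree-two obstructions *)

Section Degree2.
Variables (F : fieldType) (n : nat) (p : 'I_n -> 'I_n -> F).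
Local Notation tens := (tens F n).
Implicit Types (u a b : tens).

(* u has no constant term and its degree-two component lies in
   span{c1 i j x_i x_j - c2 i j x_j x_i} + ker S_2. *)
Definition deg2_span (c1 c2 : 'I_n -> 'I_n -> F) u :=
  u [::] = 0 /\ exists lam : 'I_n -> 'I_n -> F, forall x y,
    sym2 p (fun x y => u [:: x; y] - (lam x y * c1 x y - lam y x * c2 y x)) x y = 0.

Lemma deg2_span_subspace (c1 c2 : 'I_n -> 'I_n -> F) : subspaceB p (deg2_span c1 c2).
Proof.
split.
- by split=> //; exists (fun _ _ => 0) => x y; rewrite /sym2 /tzero; ring.
- move=> u v [u0 [lu Hu]] [v0 [lv Hv]]; split; first by rewrite /tadd u0 v0 addr0.
  exists (fun i j => lu i j + lv i j) => x y; rewrite /tadd.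
  by rewrite -[RHS](addr0 0) -{1}(Hu x y) -(Hv x y) /sym2; ring.
- move=> k u [u0 [lu Hu]]; split; first by rewrite /tscale u0 mulr0.
  exists (fun i j => k * lu i j) => x y; rewrite /tscale.
  by rewrite -[RHS](mulr0 k) -(Hu x y) /sym2; ring.
- move=> u /nichols_idealE[_ Hu]; split; first by rewrite -(qsym_nil p) Hu.
  by exists (fun _ _ => 0) => x y; rewrite /sym2 !mul0r !subr0 -qsym_pair Hu.
Qed.

Lemma deg2_span_V (c1 c2 : 'I_n -> 'I_n -> F) : contains_V (deg2_span c1 c2).
Proof.
move=> i; split=> //; exists (fun _ _ => 0) => x y.
by rewrite /sym2 /gen !eqseq_cons !andbF; ring.
Qed.

Lemma deg2_span_twist_br (c1 c2 : 'I_n -> 'I_n -> F) k1 k2 a b : a [::] = 0 -> b [::] = 0 ->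
  (forall x y, k1 * (a [:: x] * b [:: y]) - k2 * (a [:: y] * b [:: x]) =
               c1 x y * (a [:: x] * b [:: y]) - c2 y x * (a [:: y] * b [:: x])) ->
  deg2_span c1 c2 (twist_br k1 k2 a b).
Proof.
move=> a0 b0 Hk; split; first by rewrite /twist_br !tmul_nil a0 b0 !(mul0r, mulr0) subr0.
exists (fun x y => a [:: x] * b [:: y]) => x y.
have r0 x' y' : twist_br k1 k2 a b [:: x'; y'] -
    (a [:: x'] * b [:: y'] * c1 x' y' - a [:: y'] * b [:: x'] * c2 y' x') = 0.
  rewrite /twist_br !tmul_pair a0 b0 !(mul0r, mulr0, add0r, addr0) (mulrC (b _)) Hk.
  by ring.
by rewrite /sym2 !r0 mulr0 addr0.
Qed.

Lemma deg2_spanP (c1 c2 : 'I_n -> 'I_n -> F) u : deg2_span c1 c2 u -> exists lam, forall x y,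
  u [:: x; y] + p y x * u [:: y; x] =
  lam x y * (c1 x y - p y x * c2 x y) + lam y x * (p y x * c1 y x - c2 y x).
Proof.
case=> _ [lam Hlam]; exists lam => x y; apply/eqP; rewrite -subr_eq0 -(Hlam x y) /sym2.
by apply/eqP; ring.
Qed.

Lemma LV_deg2_span u : LV p u -> deg2_span (fun _ _ => 1) p u.
Proof.
apply; [exact: deg2_span_subspace | exact: deg2_span_V |].
move=> d e a b Ha Hb [a0 _] [b0 _]; rewrite braided_brE.
by apply: deg2_span_twist_br => // x y; rewrite (pdeg_letters p _ _ Ha Hb).
Qed.

Lemma LV_L_deg2_span u : LV_L p u -> deg2_span (fun x y => p y x) p u.
Proof.
apply; [exact: deg2_span_subspace | exact: deg2_span_V |].
move=> d e a b Ha Hb [a0 _] [b0 _]; rewrite lieL_brE.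
apply: deg2_span_twist_br => // x y.
by rewrite (pdeg_letters p _ _ Ha Hb) (pdeg_letters_swap p _ _ Ha Hb).
Qed.

Lemma LV_minus_deg2_span u : LV_minus p u -> deg2_span (fun _ _ => 1) (fun _ _ => 1) u.
Proof.
apply; [exact: deg2_span_subspace | exact: deg2_span_V |].
by move=> a b [a0 _] [b0 _]; rewrite comm_brE; apply: deg2_span_twist_br.
Qed.


Definition gen_braided (i j : 'I_n) : tens :=
  braided_br p (unit_deg i) (unit_deg j) (gen F i) (gen F j).
Definition gen_lieL (i j : 'I_n) : tens :=
  lieL_br p (unit_deg i) (unit_deg j) (gen F i) (gen F j).
Definition gen_comm (i j : 'I_n) : tens := comm_br (gen F i) (gen F j).

Lemma LV_gen_braided i j : LV p (gen_braided i j).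
Proof. by move=> P _ PV Pbr; apply: Pbr => //; apply: homog_gen. Qed.

Lemma LV_L_gen_lieL i j : LV_L p (gen_lieL i j).
Proof. by move=> P _ PV Pbr; apply: Pbr => //; apply: homog_gen. Qed.

Lemma LV_minus_gen_comm i j : LV_minus p (gen_comm i j).
Proof. by move=> P _ PV Pbr; apply: Pbr. Qed.

Lemma twist_br_gen k1 k2 (i j x y : 'I_n) :
  twist_br k1 k2 (gen F i) (gen F j) [:: x; y] =
  k1 * ((x == i)%:R * (y == j)%:R) - k2 * ((x == j)%:R * (y == i)%:R).
Proof.
have gen_vlin (l : 'I_n) : gen F l = vlin (fun k => (k == l)%:R).
  apply: functional_extensionality => w; rewrite vlinE /gen.
  case: w => [|k [|k' w]] //=; rewrite eqseq_cons ?andbF // andbT.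
  by case: (k == l).
by rewrite /twist_br !gen_vlin !tmul_vlin.
Qed.

Lemma gen_braided_pair i j x y : gen_braided i j [:: x; y] =
  (x == i)%:R * (y == j)%:R - p i j * ((x == j)%:R * (y == i)%:R).
Proof. by rewrite /gen_braided braided_brE twist_br_gen pdeg_unit_deg mul1r. Qed.

Lemma gen_lieL_pair i j x y : gen_lieL i j [:: x; y] =
  p j i * ((x == i)%:R * (y == j)%:R) - p i j * ((x == j)%:R * (y == i)%:R).
Proof. by rewrite /gen_lieL lieL_brE twist_br_gen !pdeg_unit_deg. Qed.

Lemma gen_comm_pair i j x y : gen_comm i j [:: x; y] =
  (x == i)%:R * (y == j)%:R - (x == j)%:R * (y == i)%:R.
Proof. by rewrite /gen_comm comm_brE twist_br_gen !mul1r. Qed.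

Lemma mul_braiding_eq1 (c1 c2 : 'I_n -> 'I_n -> F) :
  (forall x y, c1 x y = c2 y x) -> (forall i j, deg2_span c1 c2 (gen_braided i j)) ->
  forall i j, p i j * p j i = 1.
Proof.
move=> c12 span_gen i j; have [<-|ij] := eqVneq i j.
  have [K EK] := deg2_spanP (span_gen i i); apply/esym/(eq_of_subr_eq _ (EK i i)).
  by rewrite !gen_braided_pair !eqxx -!c12 /=; ring.
have ji : (j == i) = false by rewrite eq_sym (negbTE ij).
have [K EK] := deg2_spanP (span_gen i j); have [K' EK'] := deg2_spanP (span_gen j i).
apply/esym/eqP; rewrite -subr_eq0; apply/eqP.
(* The degree-two equations of gen_braided i j give 1 - p_ij p_ji = K A and K B = 0, those
   of gen_braided j i give 1 - p_ij p_ji = K' B. *)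
apply: (crossed_factors_eq0 (K := K i j - K j i) (K' := K' j i - K' i j)
  (A := c1 i j - p j i * c1 j i) (B := c1 j i - p i j * c1 i j)).
- apply: (eq_of_subr_eq _ (EK i j)).
  by rewrite !gen_braided_pair !eqxx (negbTE ij) ji -!c12 /=; ring.
- apply: (eq_of_subr_eq _ (EK j i)).
  by rewrite !gen_braided_pair !eqxx (negbTE ij) ji -!c12 /=; ring.
- apply: (eq_of_subr_eq _ (EK' j i)).
  by rewrite !gen_braided_pair !eqxx (negbTE ij) ji -!c12 /=; ring.
Qed.

Lemma sym2_deg2_span_braided u i j : p i j * p j i = 1 ->
  deg2_span (fun _ _ => 1) p u -> u [:: i; j] + p j i * u [:: j; i] = 0.
Proof.
move=> pij /deg2_spanP[lam ->].
by rewrite (mulrC (p j i)) pij mulr1 !subrr !mulr0 addr0.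
Qed.

End Degree2.

Section Converse.
Variables (F : fieldType) (n : nat) (p : 'I_n -> 'I_n -> F).

Lemma sign_braiding_of_LV_minus :
  (forall u, LV p u <-> LV_minus p u) -> sign_braiding p.
Proof.
move=> LV_eq.
have pp1 : forall i j, p i j * p j i = 1.
  apply: (@mul_braiding_eq1 _ _ _ (fun _ _ => 1) (fun _ _ => 1)) => // i j.
  by apply: LV_minus_deg2_span; apply/LV_eq; apply: LV_gen_braided.
split=> [i | i j ij]; first by rewrite expr2 pp1.
have ji : (j == i) = false by rewrite eq_sym (negbTE ij).
have span_comm := LV_deg2_span (proj2 (LV_eq _) (LV_minus_gen_comm i j)).
have := sym2_deg2_span_braided (pp1 i j) span_comm.
have := sym2_deg2_span_braided (pp1 j i) span_comm.
rewrite !gen_comm_pair !eqxx (negbTE ij) ji /= => Eji Eij.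
by split; [apply: (eq_of_subr_eq _ Eji) | apply/esym/(eq_of_subr_eq _ Eij)]; ring.
Qed.

Lemma sign_braiding_of_LV_L :
  (forall u, LV p u <-> LV_L p u) -> sign_braiding p.
Proof.
move=> LV_eq.
have pp1 : forall i j, p i j * p j i = 1.
  apply: (@mul_braiding_eq1 _ _ _ (fun x y => p y x) p) => // i j.
  by apply: LV_L_deg2_span; apply/LV_eq; apply: LV_gen_braided.
split=> [i | i j ij]; first by rewrite expr2 pp1.
have ji : (j == i) = false by rewrite eq_sym (negbTE ij).
have span_lieL := LV_deg2_span (proj2 (LV_eq _) (LV_L_gen_lieL i j)).
have := sym2_deg2_span_braided (pp1 i j) span_lieL.
have := sym2_deg2_span_braided (pp1 j i) span_lieL.
rewrite !gen_lieL_pair !eqxx (negbTE ij) ji /= => Eji Eij.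
split; [rewrite -[RHS](pp1 i j) | rewrite -[RHS](pp1 j i)].
  by apply/esym/(eq_of_subr_eq _ Eji); ring.
by apply: (eq_of_subr_eq _ Eij); ring.
Qed.

End Converse.

Theorem proposition5p2 (F : fieldType) (n : nat) (p : 'I_n -> 'I_n -> F) :
  [pchar F] =i pred0 ->
  (forall i j, p i j != 0) ->
  [/\ ((forall u, LV p u <-> LV_L p u) <-> (forall u, LV p u <-> LV_minus p u)),
      ((forall u, LV p u <-> LV_minus p u) <->
         ((forall i, p i i ^+ 2 = 1) /\
          (forall i j, i != j -> p i j = 1 /\ p j i = 1)))
    & (((forall i, p i i ^+ 2 = 1) /\
        (forall i j, i != j -> p i j = 1 /\ p j i = 1)) ->
       forall u, (LV p u <-> LV_L p u) /\ (LV p u <-> Vsp p u))].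
Proof.
move=> _ _.
have all_Vsp : sign_braiding p -> forall u,
    [/\ LV p u <-> Vsp p u, LV_L p u <-> Vsp p u & LV_minus p u <-> Vsp p u].
  by move=> sign_p u; split; [exact: LV_Vsp | exact: LV_L_Vsp | exact: LV_minus_Vsp].
split.
- split=> LV_eq u.
    by have [? ? ?] := all_Vsp (sign_braiding_of_LV_L LV_eq) u; tauto.
  by have [? ? ?] := all_Vsp (sign_braiding_of_LV_minus LV_eq) u; tauto.
- split=> [|sign_p u]; first exact: sign_braiding_of_LV_minus.
  by have [? ? ?] := all_Vsp sign_p u; tauto.
- by move=> sign_p u; have [? ? ?] := all_Vsp sign_p u; tauto.
Qed.
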